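(* Let $\mathcal{C}$ be a contraction indicator of order $n$. Define an assignment $Z$ on $S(n)$ by $$Z(G)=\{v\in V(G): \exists\, H\in S_2(n),\ w\in V(H)\text{ with }\ell(w)\in\mathcal{C},\ G\rightsquigarrow H,\ v\rightsquigarrow w\}.$$ Then $Z$ is a smooth extremal assignment.
   Context: $[n]=\{1,\dots,n\}$. A stable $n$-labeled tree is a finite tree with $n$ leaves labeled bijectively by $[n]$, all internal vertices of degree $\ge 3$; $V(G)$ its internal vertices; $S(n)$ the set of such trees up to label-preserving isomorphism and $S_2(n)$ those with exactly 2 internal vertices. For a vertex $w$, $\ell(w)$ is the set of labels of leaves adjacent to $w$. $G\rightsquigarrow G'$: $G'$ obtained by collapsing connected sets of internal vertices, inducing surjection $\pi:V(G)\to V(G')$; $v\rightsquigarrow w$ means $\pi(v)=w$. An extremal assignment of order $n$: rule $Z(G)\subset V(G)$ for $G\in S(n)$ with (a) $Z(G)\ne V(G)$, (b) if $G\rightsquigarrow G'$ and $\pi^{-1}(v')=\{v_1,\dots,v_k\}$ then $v'\in Z(G')\iff v_1,\dots,v_k\in Z(G)$. $Z$ is smooth if for every $G$ and $v\in Z(G)$ there exist $G'\in S_2(n)$, $v'\in Z(G')$ with $G\rightsquigarrow G'$, $v\rightsquigarrow v'$. A contraction indicator is a collection $\mathcal{C}$ of subsets of $[n]$ with (1) $2\le|B|\le n-2$ for $B\in\mathcal{C}$; (2) $B\in\mathcal{C}$, $B'\subset B$, $|B'|\ge2$ imply $B'\in\mathcal{C}$; (3) $B_1\cup B_2\ne[n]$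 for $B_1,B_2\in\mathcal{C}$. *)

From HB Require Import structures.
From mathcomp Require Import all_boot.
Set Implicit Arguments. Unset Strict Implicit. Unset Printing Implicit Defensive.

(* A stable n-labeled tree, given concretely: internal vertices 'I_nv,
   adjacency [adj] among internal vertices, and leaf i attached to the
   internal vertex [lf i].  The whole graph (internal vertices + leaves) is
   a tree iff the internal graph is a (nonempty) tree: connected with
   nv - 1 edges (each edge counted twice as an ordered pair). *)
Record stree (n : nat) := STree {
  nv : nat;
  adj : rel 'I_nv;
  lf : 'I_n -> 'I_nv;
  nv_gt0 : 0 < nv;
  adj_sym : symmetric adj;
  adj_irr : irreflexive adj;
  adj_conn : forall x y, connect adj x y;
  adj_card : #|[set p : 'I_nv * 'I_nv | adj p.1 p.2]| = (nv.-1).*2;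
  stable : forall v : 'I_nv,
      3 <= #|[set u | adj v u]| + #|[set i | lf i == v]|
}.
Arguments nv {n} s.
Arguments adj {n} s.
Arguments lf {n} s.

Definition leafset {n} (G : stree n) (w : 'I_(nv G)) : {set 'I_n} :=
  [set i | lf G i == w].
Arguments leafset {n} G w.

(* G ~> H via pi : H is obtained from G by collapsing connected sets of
   internal vertices, pi being the induced surjection. *)
Definition contraction n (G H : stree n) (pi : 'I_(nv G) -> 'I_(nv H)) : Prop :=
  [/\ (forall w, exists v, pi v = w),
      (forall i, lf H i = pi (lf G i)),
      (forall u x y, pi x = u -> pi y = u ->
          connect (fun a b => [&& adj G a b, pi a == u & pi b == u]) x y)
    & (forall u w, adj H u w <->
          (u != w /\ exists x y, [/\ pi x = u, pi y = w & adj G x y]))].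
Arguments contraction {n} G H pi.

Definition assignment n := forall G : stree n, 'I_(nv G) -> Prop.

Definition extremal n (Z : assignment n) : Prop :=
  (forall G : stree n, exists v, ~ Z G v) /\
  (forall (G G' : stree n) (pi : 'I_(nv G) -> 'I_(nv G')),
      contraction G G' pi ->
      forall v', Z G' v' <-> (forall v, pi v = v' -> Z G v)).

Definition smooth n (Z : assignment n) : Prop :=
  forall (G : stree n) v, Z G v ->
    exists (G' : stree n) (pi : 'I_(nv G) -> 'I_(nv G')),
      [/\ nv G' = 2, contraction G G' pi & Z G' (pi v)].

Definition contraction_indicator n (C : {set {set 'I_n}}) : Prop :=
  [/\ (forall B : {set 'I_n}, B \in C -> 2 <= #|B| <= n - 2),
      (forall B B' : {set 'I_n}, B \in C -> B' \subset B -> 2 <= #|B'| -> B' \in C)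
    & (forall B1 B2 : {set 'I_n}, B1 \in C -> B2 \in C -> B1 :|: B2 != setT)].

Definition Z_of n (C : {set {set 'I_n}}) : assignment n :=
  fun G v => exists (H : stree n) (pi : 'I_(nv G) -> 'I_(nv H)),
    [/\ nv H = 2, contraction G H pi & leafset H (pi v) \in C].

From mathcomp Require Import all_boot zify.
From Stdlib Require Import Classical.
Set Implicit Arguments. Unset Strict Implicit. Unset Printing Implicit Defensive.

(* Contracting G onto a two-vertex tree H amounts to choosing an internal edge of G,
   i.e. a set A of internal vertices such that A and its complement are both connected
   (an edge cut); the vertex w of H onto which A collapses has l(w) = l(A). Hence Z(G)
   is the union of the C-cuts, the edge cuts A with l(A) in C.
   Two C-cuts never satisfy ~: A \subset A', since then l(A) :|: l(A') = [n] (axiom 3).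
   So if an edge xy leaves a C-cut A and y lies in a C-cut A', then A \subset A', and
   C-cuts meeting a connected set F whose vertices all lie in C-cuts can be enlarged
   until one contains F. For F = V(G) this contradicts ~: A != set0, so Z(G) != V(G).
   For F a fibre of a contraction G ~> G', a C-cut containing F is then shrunk, using
   axiom 2, to one that is a union of fibres; its image is a C-cut of G' containing the
   image of F. Conversely, C-cuts of G' pull back to C-cuts of G. Smoothness is
   immediate, the witness H being itself in S_2(n). *)

Section InducedRelation.
Variables (T : finType) (e : rel T).

Definition induced (X : {set T}) : rel T := fun a b => [&& e a b, a \in X & b \in X].

Definition connected (X : {set T}) :=
  forall x y, x \in X -> y \in X -> connect (induced X) x y.

Lemma induced_sym (X : {set T}) : symmetric e -> symmetric (induced X).
Proof.
by move=> se a b; rewrite /induced se andbCA andbA [_ && (a \in X)]andbC -andbA andbCA.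
Qed.

Lemma connect_induced_subset (X Y : {set T}) x y :
  X \subset Y -> connect (induced X) x y -> connect (induced Y) x y.
Proof.
move=> sXY; apply: connect_sub => a b /and3P[eab aX bY].
by apply: connect1; rewrite /induced eab !(subsetP sXY).
Qed.

Lemma connect_induced_mem (X : {set T}) x y :
  connect (induced X) x y -> x \in X -> y \in X.
Proof.
move/connectP=> [s pth ->]; elim: s x pth => [|z s IH] x //=.
by move=> /andP[/and3P[_ _ zX] pth] _; apply: IH.
Qed.

Lemma connect_induced_restrict (X Y : {set T}) x y :
  connect (induced X) x y -> (forall z, connect (induced X) x z -> z \in Y) ->
  connect (induced Y) x y.
Proof.
move/connectP=> [s pth ->]; elim: s x pth => [|z s IH] x /=; first by rewrite connect0.
move=> /andP[exz pth] reachY.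
have xY : x \in Y by apply: reachY; rewrite connect0.
have zY : z \in Y by apply: reachY; rewrite connect1.
apply: connect_trans (IH z pth _).
  by apply: connect1; case/and3P: exz => exz _ _; rewrite /induced exz xY zY.
by move=> w hw; apply: reachY; apply: connect_trans hw; rewrite connect1.
Qed.

Lemma connect_exit (X : {set T}) a b : connect e a b -> a \in X -> b \notin X ->
  exists p q, [/\ connect (induced X) a p, p \in X, e p q & q \notin X].
Proof.
move/connectP=> [s pth ->]; elim: s a pth => [|c s IH] a /=; first by move=> _ ->.
move=> /andP[eac pth] aX bX; have [cX | cX] := boolP (c \in X); last by exists a, c.
have [p [q [cp pX epq qX]]] := IH c pth cX bX.
exists p, q; split=> //; apply: connect_trans cp.
by apply: connect1; rewrite /induced eac aX cX.
Qed.

End InducedRelation.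

Lemma connect_homo (T T' : finType) (e : rel T) (e' : rel T') (f : T -> T') x y :
  (forall a b, e a b -> connect e' (f a) (f b)) -> connect e x y ->
  connect e' (f x) (f y).
Proof.
move=> homo_f /connectP[s pth ->].
elim: s x pth => [|z s IH] x /=; first by rewrite connect0.
by move/andP=> [exz pth]; apply: connect_trans (homo_f _ _ exz) (IH _ pth).
Qed.

Lemma card_set_sum (T : finType) (P : pred T) : #|[set x | P x]| = \sum_x P x.
Proof. by rewrite -sum1dep_card big_mkcond; apply: eq_bigr => x _; case: (P x). Qed.

Lemma sum_setC (T : finType) (A : {set T}) (F : T -> nat) :
  \sum_i F i = \sum_(i in A) F i + \sum_(i in ~: A) F i.
Proof. by rewrite (bigID (mem A)); congr (_ + _); apply: eq_bigl => i; rewrite in_setC. Qed.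

Lemma leq_summand (T : finType) (P : pred T) (F : T -> nat) i :
  P i -> F i <= \sum_(k | P k) F k.
Proof. by move=> Pi; rewrite (bigD1 i) //= leq_addr. Qed.

Lemma leq_summands2 (T : finType) (P : pred T) (F : T -> nat) i j :
  i != j -> P i -> P j -> F i + F j <= \sum_(k | P k) F k.
Proof.
move=> ij Pi Pj; rewrite (bigD1 i) //= leq_add2l.
by apply: (leq_summand (P := fun k => P k && (k != i))); rewrite Pj eq_sym ij.
Qed.

Section Tree.
Variables (n : nat) (G : stree n).
Local Notation V := 'I_(nv G).
Local Notation connectedG := (connected (adj G)).
Local Notation inducedG := (induced (adj G)).

(* Counts ordered pairs, so each edge inside S counts twice, as in [adj_card]. *)
Definition ecount (S T : {set V}) := \sum_(a in S) \sum_(b in T) (adj G a b : nat).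

Definition edge_cut (A : {set V}) :=
  [/\ A != set0, ~: A != set0, connectedG A & connectedG (~: A)].

Definition leaves (A : {set V}) := [set i | lf G i \in A].

Lemma connect_inducedG_sym (S : {set V}) x y :
  connect (inducedG S) x y = connect (inducedG S) y x.
Proof. exact/sym_connect_sym/induced_sym/adj_sym. Qed.

Lemma ecount_setC_sum (A : {set V}) :
  ecount A A + ecount A (~: A) + ecount (~: A) A + ecount (~: A) (~: A) = (nv G).-1.*2.
Proof.
have -> : (nv G).-1.*2 = \sum_a \sum_b (adj G a b : nat).
  by rewrite pair_big /= -(adj_card G) (card_set_sum (fun p : V * V => adj G p.1 p.2)).
rewrite (sum_setC A (fun a => \sum_b (adj G a b : nat))).
by rewrite !(eq_bigr _ (fun a _ => sum_setC A _)) !big_split /= /ecount addnA.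
Qed.

Lemma ecount_setU1 (T : {set V}) p q :
  q \notin T -> p \in T -> adj G p q -> ecount T T + 2 <= ecount (q |: T) (q |: T).
Proof.
move=> qT pT apq; rewrite /ecount !(big_setU1 _ qT) /=.
under [X in _ <= _ + X]eq_bigr => a _ do rewrite (big_setU1 _ qT).
rewrite big_split /= addnA [X in _ <= X]addnC leq_add2l -addnA.
apply: leq_trans (leq_addl (adj G q q) _); apply: (@leq_add 1 1).
  by rewrite (bigD1 p) //= adj_sym apq.
by rewrite (bigD1 p) //= apq.
Qed.

Lemma connected_ecount_subset (S : {set V}) k : connectedG S -> k < #|S| ->
  exists2 T : {set V}, T \subset S & #|T| = k.+1 /\ k.*2 <= ecount T T.
Proof.
move=> cS; elim: k => [|k IH] ltkS.
  have [s sS] : exists s, s \in S by apply/set0Pn; rewrite -card_gt0.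
  by exists [set s]; rewrite ?sub1set ?cards1.
have [T sTS [cardT eT]] := IH (ltnW ltkS).
have /properP[_ [b bS bT]] : T \proper S by rewrite properEcard sTS cardT.
have [a aT] : exists a, a \in T by apply/set0Pn; rewrite -card_gt0 cardT.
have aS := subsetP sTS a aT.
have [p [q [_ pT /and3P[apq _ qS] qT]]] := connect_exit (cS a b aS bS) aT bT.
exists (q |: T); first by rewrite subUset sub1set qS sTS.
rewrite cardsU1 qT cardT; split=> //.
by apply: leq_trans (ecount_setU1 qT pT apq); rewrite doubleS -addn2 leq_add2r.
Qed.

Lemma connected_ecount (S : {set V}) :
  connectedG S -> S != set0 -> #|S|.-1.*2 <= ecount S S.
Proof.
rewrite -card_gt0 => cS S_gt0.
have ltS : #|S|.-1 < #|S| by rewrite ltn_predL.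
have [T sTS [cardT eT]] := connected_ecount_subset cS ltS.
have -> : S = T by apply/eqP; rewrite eq_sym eqEcard sTS cardT prednK ?leqnn.
by rewrite cardT.
Qed.

Lemma exists_cross_edge (A : {set V}) : A != set0 -> ~: A != set0 ->
  exists p q, [/\ p \in A, q \notin A & adj G p q].
Proof.
move=> /set0Pn[a aA] /set0Pn[b]; rewrite in_setC => bA.
by have [p [q [_ pA apq qA]]] := connect_exit (adj_conn a b) aA bA; exists p, q.
Qed.

Lemma sum_degree (A : {set V}) :
  \sum_(v in A) #|[set u | adj G v u]| = ecount A A + ecount A (~: A).
Proof.
by rewrite /ecount -big_split; apply: eq_bigr => v _; rewrite card_set_sum (sum_setC A).
Qed.

Lemma sum_leaf_degree (A : {set V}) :
  \sum_(v in A) #|[set i | lf G i == v]| = #|leaves A|.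
Proof.
rewrite card_set_sum (eq_bigr _ (fun v _ => card_set_sum _)) exchange_big /=.
apply: eq_bigr => i _; have [liA | liA] := boolP (lf G i \in A).
  rewrite (bigD1 (lf G i)) //= eqxx big1 // => v /andP[_].
  by rewrite eq_sym => /negbTE ->.
by rewrite big1 // => v vA; case: eqP => // liv; rewrite liv vA in liA.
Qed.

(* Each side spans at least |side| - 1 edges, so the |V| - 1 edges of the tree leave
   room for exactly one crossing edge; then stability at the vertices of A forces at
   least |A| + 1 leaves on A. *)
Lemma edge_cut_bounds (A : {set V}) :
  edge_cut A -> 2 <= #|leaves A| /\ ecount A (~: A) <= 1.
Proof.
case=> A_n0 CA_n0 cA cCA.
have inA := connected_ecount cA A_n0.
have inCA := connected_ecount cCA CA_n0.
have cross : 1 <= ecount (~: A) A.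
  have := exists_cross_edge CA_n0; rewrite setCK => /(_ A_n0)[p [q [pA]]].
  rewrite in_setC negbK => qA apq.
  apply: leq_trans (leq_summand (fun v => \sum_(w in A) (adj G v w : nat)) pA).
  by rewrite (bigD1 q) //= apq.
have degA : #|A| * 3 <= ecount A A + ecount A (~: A) + #|leaves A|.
  rewrite -sum_degree -sum_leaf_degree -big_split -sum_nat_const.
  by apply: leq_sum => v _; apply: stable.
have total := ecount_setC_sum A.
have cardA := cardsC A; rewrite card_ord in cardA.
move: A_n0 CA_n0; rewrite -!card_gt0; lia.
Qed.

Lemma edge_cut_cross_uniq (A : {set V}) x y x' y' : edge_cut A ->
  x \in A -> y \notin A -> adj G x y -> x' \in A -> y' \notin A -> adj G x' y' ->
  (x, y) = (x', y').
Proof.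
move=> /edge_cut_bounds[_ cross_le1] xA yA axy xA' yA' axy'.
apply/eqP; apply: contraTT cross_le1 => neq; rewrite -ltnNge /ecount pair_big_dep /=.
apply: leq_trans (leq_summands2 (fun p => (adj G p.1 p.2 : nat)) neq _ _).
  by rewrite /= axy axy'.
all: by rewrite /= ?in_setC ?xA ?yA ?xA' ?yA'.
Qed.

Lemma edge_cutC (A : {set V}) : edge_cut A -> edge_cut (~: A).
Proof. by case=> A_n0 CA_n0 cA cCA; split; rewrite ?setCK. Qed.

Lemma leavesC (A : {set V}) : leaves (~: A) = ~: leaves A.
Proof. by apply/setP => i; rewrite !inE. Qed.

Lemma leaves_subset (A B : {set V}) : A \subset B -> leaves A \subset leaves B.
Proof. by move=> sAB; apply/subsetP => i; rewrite !inE; apply: (subsetP sAB). Qed.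

Lemma edge_cut_nested (A A' : {set V}) x y : edge_cut A -> edge_cut A' ->
  x \in A -> y \notin A -> adj G x y -> y \in A' -> A \subset A' \/ ~: A \subset A'.
Proof.
move=> cutA cutA' xA yA axy yA'.
have [_ _ _ cCA] := cutA; have [_ _ _ cCA'] := cutA'.
have [sCA' | /subsetPn[b bCA bA']] := boolP (~: A \subset A'); [by right | left].
have bCA' : b \in ~: A' by rewrite in_setC.
have xA' : x \in A'.
  apply/negPn/negP => xA'; have ayx : adj G y x by rewrite adj_sym.
  have yCA : y \in ~: A by rewrite in_setC.
  have [p [q [_ pA' /and3P[apq _ qCA] qA']]] := connect_exit (cCA y b yCA bCA) yA' bA'.
  case: (edge_cut_cross_uniq cutA' pA' qA' apq yA' xA' ayx) => _ qx.
  by rewrite qx in_setC xA in qCA.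
apply/subsetP => a aA; apply/negPn/negP => aA'.
have aCA' : a \in ~: A' by rewrite in_setC.
rewrite in_setC in bCA.
have [p [q [_ pA /and3P[apq pCA' _] qA]]] := connect_exit (cCA' a b aCA' bCA') aA bCA.
case: (edge_cut_cross_uniq cutA pA qA apq xA yA axy) => px _.
by rewrite px in_setC xA' in pCA'.
Qed.

Definition component (X F : {set V}) :=
  [set v | [exists f in F, connect (inducedG X) f v]].

Lemma component_subset (X F : {set V}) : F \subset X -> component X F \subset X.
Proof.
move=> sFX; apply/subsetP => v; rewrite inE => /exists_inP[f fF].
by move/connect_induced_mem; apply; apply: (subsetP sFX).
Qed.

Lemma subset_component (X F : {set V}) : F \subset component X F.
Proof. by apply/subsetP => f fF; rewrite inE; apply/exists_inP; exists f. Qed.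

Lemma component_connect (X F : {set V}) u z :
  connect (inducedG X) u z -> z \in component X F -> u \in component X F.
Proof.
move=> uz; rewrite !inE => /exists_inP[f fF fz]; apply/exists_inP; exists f => //.
by apply: connect_trans fz _; rewrite connect_inducedG_sym.
Qed.

Lemma connected_component (X F : {set V}) :
  F \subset X -> connectedG F -> connectedG (component X F).
Proof.
move=> sFX cF x y; rewrite !inE => /exists_inP[fx fxF fx_x] /exists_inP[fy fyF fy_y].
have xy : connect (inducedG X) x y.
  apply: connect_trans (_ : connect _ x fx) _; first by rewrite connect_inducedG_sym.
  by apply: connect_trans fy_y; apply: connect_induced_subset sFX (cF _ _ fxF fyF).
apply: connect_induced_restrict xy _ => z xz; rewrite inE; apply/exists_inP.
by exists fx => //; apply: connect_trans fx_x xz.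
Qed.

Lemma connected_setC_component (X F : {set V}) c :
  F \subset X -> c \notin X -> connectedG (~: X) -> connectedG (~: component X F).
Proof.
move=> sFX cX cCX; set K := component X F.
have sCXK : ~: X \subset ~: K by rewrite setCS component_subset.
have cCXc u : u \notin X -> connect (inducedG (~: K)) u c.
  by move=> uX; apply: connect_induced_subset sCXK _; apply: cCX; rewrite in_setC.
suff to_c u : u \in ~: K -> connect (inducedG (~: K)) u c.
  move=> x y xK yK; apply: connect_trans (to_c x xK) _.
  by rewrite connect_inducedG_sym to_c.
rewrite in_setC => uK; have [uX | /cCXc //] := boolP (u \in X).
have [p [q [up pX apq qX]]] := connect_exit (adj_conn u c) uX cX.
have pK : p \notin K by apply: contra uK; apply: component_connect.
have up_K : connect (inducedG (~: K)) u p.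
  apply: connect_induced_restrict up _ => z uz; rewrite in_setC.
  by apply: contra uK; apply: component_connect.
have qK : q \notin K by apply: contra qX; apply: (subsetP (component_subset sFX)).
apply: connect_trans up_K (connect_trans (connect1 _) (cCXc q qX)).
by rewrite /induced apq !in_setC pK qK.
Qed.

Lemma edge_cut_component (X F : {set V}) c :
  F \subset X -> connectedG F -> F != set0 -> c \notin X -> connectedG (~: X) ->
  edge_cut (component X F).
Proof.
move=> sFX cF F_n0 cX cCX; split.
- have /set0Pn[f fF] := F_n0; apply/set0Pn; exists f.
  exact: (subsetP (subset_component X F)).
- apply/set0Pn; exists c; rewrite in_setC; apply: contra cX.
  exact: (subsetP (component_subset sFX)).
- exact: connected_component.
- exact: connected_setC_component cX cCX.
Qed.

End Tree.

Lemma ord2_cases (u : 'I_2) : u = ord0 \/ u = ord_max.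
Proof. by case: u => [[|[|m]] hm] //; [left | right]; apply: val_inj. Qed.

Section TwoVertexTree.
Variables (n : nat) (L : {set 'I_n}).
Hypotheses (L_ge2 : 2 <= #|L|) (CL_ge2 : 2 <= #|~: L|).

Definition adj2 : rel 'I_2 := fun a b => a != b.

Definition lf2 (i : 'I_n) : 'I_2 := if i \in L then ord0 else ord_max.

Lemma adj2_sym : symmetric adj2.
Proof. by move=> a b; rewrite /adj2 eq_sym. Qed.

Lemma adj2_irr : irreflexive adj2.
Proof. by move=> a; rewrite /adj2 eqxx. Qed.

Lemma adj2_conn x y : connect adj2 x y.
Proof. by have [-> | xy] := eqVneq x y; [rewrite connect0 | apply: connect1]. Qed.

Lemma adj2_card : #|[set p : 'I_2 * 'I_2 | adj2 p.1 p.2]| = (2.-1).*2.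
Proof.
suff -> : [set p : 'I_2 * 'I_2 | adj2 p.1 p.2] = [set (ord0, ord_max); (ord_max, ord0)].
  by rewrite cards2.
apply/setP => -[a b]; rewrite !inE /adj2 /=.
by case: (ord2_cases a) => ->; case: (ord2_cases b) => ->.
Qed.

Lemma stable2 (v : 'I_2) : 3 <= #|[set u | adj2 v u]| + #|[set i | lf2 i == v]|.
Proof.
have -> : #|[set u | adj2 v u]| = 1.
  have -> : [set u | adj2 v u] = [set~ v] by apply/setP => u; rewrite !inE /adj2 eq_sym.
  by rewrite cardsC1 card_ord.
case: (ord2_cases v) => ->.
  suff -> : [set i | lf2 i == ord0] = L by [].
  by apply/setP => i; rewrite inE /lf2; case: (i \in L).
suff -> : [set i | lf2 i == ord_max] = ~: L by [].
by apply/setP => i; rewrite !inE /lf2; case: (i \in L).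
Qed.

Definition tree2 : stree n :=
  @STree n 2 adj2 lf2 isT adj2_sym adj2_irr adj2_conn adj2_card stable2.

End TwoVertexTree.

Section Contraction.
Variables (n : nat) (G G' : stree n) (pi : 'I_(nv G) -> 'I_(nv G')).
Hypothesis cp : contraction G G' pi.
Local Notation connectedG := (connected (adj G)).
Local Notation connectedG' := (connected (adj G')).

Lemma fiber_connected u : connectedG [set v | pi v == u].
Proof.
case: cp => _ _ fib _ x y; rewrite !inE => /eqP xu /eqP yu.
rewrite -(eq_connect (e := fun a b => [&& adj G a b, pi a == u & pi b == u])) ?fib //.
by move=> a b; rewrite /induced !inE.
Qed.

Lemma connected_preimset (S' : {set 'I_(nv G')}) :
  connectedG' S' -> connectedG [set x | pi x \in S'].
Proof.
move=> cS' x y; rewrite !inE => xS' yS'.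
have in_fiber u x1 y1 : u \in S' -> pi x1 = u -> pi y1 = u ->
    connect (induced (adj G) [set x | pi x \in S']) x1 y1.
  move=> uS' x1u y1u; apply: (connect_induced_subset (X := [set v | pi v == u])).
    by apply/subsetP => v; rewrite !inE => /eqP ->.
  by apply: fiber_connected; rewrite inE ?x1u ?y1u.
have /connectP[s pth ey] := cS' _ _ xS' yS'.
elim: s x xS' pth ey => [|z s IH] x xS' /=.
  by move=> _ ey; apply: (in_fiber (pi x)) ey.
move=> /andP[/and3P[axz _ zS'] pth] ey.
have [_ _ _ adjE] := cp; have [_ [x0 [z0 [x0x z0z axz0]]]] := (adjE _ _).1 axz.
apply: connect_trans (in_fiber _ x x0 xS' erefl x0x) _.
apply: connect_trans (connect1 (_ : induced _ _ x0 z0)) (IH z0 _ _ _); rewrite ?z0z //.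
by rewrite /induced axz0 !inE x0x z0z xS'.
Qed.

Lemma connected_imset (S : {set 'I_(nv G)}) (S' : {set 'I_(nv G')}) :
  {in S, forall a, pi a \in S'} -> {in S', forall x', exists2 x, x \in S & pi x = x'} ->
  connectedG S -> connectedG' S'.
Proof.
move=> piS onto cS x' y' /onto[x xS <-] /onto[y yS <-].
apply: (connect_homo (f := pi)) (cS _ _ xS yS) => a b /and3P[ab aS bS].
have [-> | ab'] := eqVneq (pi a) (pi b); first exact: connect0.
apply: connect1; rewrite /induced !piS // !andbT.
by case: cp => _ _ _ adjE; apply/adjE; split=> //; exists a, b.
Qed.

End Contraction.

Lemma contraction_id n (G : stree n) : contraction G G id.
Proof.
split=> [w | // | u x y /= -> -> | u w]; first by exists w.
- exact: connect0.
split=> [auw | [_ [x [y [<- <- //]]]]].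
by split; [apply: contraTneq auw => ->; rewrite adj_irr | exists u, w].
Qed.

Lemma ord2_other m (u : 'I_m) : m = 2 -> exists2 w, w != u & forall a, a != u -> a = w.
Proof.
move=> m2; subst m; case: (ord2_cases u) => ->; [exists ord_max | exists ord0] => // a;
  by case: (ord2_cases a) => ->.
Qed.

Section TwoVertexContraction.
Variables (n : nat) (G : stree n).

Lemma edge_cut_fiber (H : stree n) (pi : 'I_(nv G) -> 'I_(nv H)) u :
  nv H = 2 -> contraction G H pi ->
  edge_cut [set x | pi x == u] /\ leaves [set x | pi x == u] = leafset H u.
Proof.
move=> H2 cp; have [w wu other] := ord2_other u H2; have [onto lfE _ _] := cp.
have CfibE : ~: [set x | pi x == u] = [set x | pi x == w].
  apply/setP => x; rewrite !inE.
  by have [-> | /other ->] := eqVneq (pi x) u; rewrite ?eqxx // eq_sym (negbTE wu).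
split; last by apply/setP => i; rewrite !inE lfE.
split; rewrite ?CfibE; try exact: fiber_connected.
- by have [x xu] := onto u; apply/set0Pn; exists x; rewrite inE xu.
- by have [x xw] := onto w; apply/set0Pn; exists x; rewrite inE xw.
Qed.

Lemma edge_cut_contraction (A : {set 'I_(nv G)}) v : edge_cut A -> v \in A ->
  exists (H : stree n) (pi : 'I_(nv G) -> 'I_(nv H)),
    [/\ nv H = 2, contraction G H pi & leafset H (pi v) = leaves A].
Proof.
move=> cutA vA; have [A_n0 CA_n0 cA cCA] := cutA.
have [LA_ge2 _] := edge_cut_bounds cutA.
have [LCA_ge2 _] := edge_cut_bounds (edge_cutC cutA); rewrite leavesC in LCA_ge2.
pose pi x : 'I_2 := if x \in A then ord0 else ord_max.
have pi0 x : (pi x == ord0) = (x \in A) by rewrite /pi; case: (x \in A).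
have pi1 x : (pi x == ord_max) = (x \in ~: A) by rewrite /pi in_setC; case: (x \in A).
exists (tree2 LA_ge2 LCA_ge2), pi; split=> //; last first.
  by apply/setP => i; rewrite !inE /= /lf2 /pi vA inE; case: (lf G i \in A).
split=> [w | i | u x y | u w].
- case: (ord2_cases w) => ->.
    by have /set0Pn[a aA] := A_n0; exists a; apply/eqP; rewrite pi0.
  by have /set0Pn[b bA] := CA_n0; exists b; apply/eqP; rewrite pi1.
- by rewrite /= /lf2 /pi inE.
- case: (ord2_cases u) => -> /eqP + /eqP; rewrite ?pi0 ?pi1 => xA yA.
    rewrite -(eq_connect (e := induced (adj G) A)) ?cA // => a b.
    by rewrite /induced !pi0.
  rewrite -(eq_connect (e := induced (adj G) (~: A))) ?cCA // => a b.
  by rewrite /induced !pi1.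
- split=> [uw | [] //]; split=> //.
  have [p [q [pA qA apq]]] := exists_cross_edge A_n0 CA_n0.
  have [pp pq] : pi p = ord0 /\ pi q = ord_max by rewrite /pi pA (negbTE qA).
  move: uw; rewrite /= /adj2.
  case: (ord2_cases u) => ->; case: (ord2_cases w) => -> // _.
    by exists p, q.
  by exists q, p; rewrite adj_sym.
Qed.

End TwoVertexContraction.

Section ContractionIndicator.
Variables (n : nat) (C : {set {set 'I_n}}).

Definition C_cut (G : stree n) (A : {set 'I_(nv G)}) := edge_cut A /\ leaves A \in C.

Lemma Z_ofP (G : stree n) (v : 'I_(nv G)) : Z_of C v <-> exists2 A, C_cut A & v \in A.
Proof.
split=> [[H [pi [H2 cp LC]]] | [A [cutA LC] vA]].
  have [cut_fib leavesE] := edge_cut_fiber (pi v) H2 cp.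
  by exists [set x | pi x == pi v]; rewrite ?inE // /C_cut leavesE.
have [H [pi [H2 cp leavesE]]] := edge_cut_contraction cutA vA.
by exists H, pi; rewrite leavesE.
Qed.

Hypothesis indC : contraction_indicator C.

Lemma C_cut_setC_subset (G : stree n) (A A' : {set 'I_(nv G)}) :
  C_cut A -> C_cut A' -> ~ (~: A \subset A').
Proof.
move=> [_ LA] [_ LA'] sCA; have [_ _ /(_ _ _ LA LA')] := indC; apply/negP/negPn.
apply/eqP/setP => i; rewrite !inE; apply/orP.
have [liA | liA] := boolP (lf G i \in A); [by left | right].
by apply: (subsetP sCA); rewrite in_setC.
Qed.

Section Cover.
Variables (G : stree n) (F : {set 'I_(nv G)}).
Hypotheses (cF : connected (adj G) F)
  (coverF : {in F, forall v, exists2 A, C_cut A & v \in A}).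

Lemma C_cut_extend (A : {set 'I_(nv G)}) f :
  C_cut A -> f \in F -> f \in A -> ~~ (F \subset A) ->
  exists A', [/\ C_cut A', exists2 f', f' \in F & f' \in A' & #|~: A'| < #|~: A|].
Proof.
move=> CA fF fA /subsetPn[g gF gA].
have [p [q [_ pA /and3P[apq _ qF] qA]]] := connect_exit (cF fF gF) fA gA.
have [A' CA' qA'] := coverF qF.
have [sAA' | sCAA'] := edge_cut_nested CA.1 CA'.1 pA qA apq qA'; last first.
  by case: (C_cut_setC_subset CA CA' sCAA').
exists A'; split=> //; first by exists q.
apply: proper_card; rewrite properEneq setCS sAA' andbT.
by apply: contraNneq qA => /setC_inj <-.
Qed.

Lemma C_cut_cover : F != set0 -> exists2 A, C_cut A & F \subset A.
Proof.
case/set0Pn=> f fF; have [A CA fA] := coverF fF.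
have [m] := ubnP #|~: A|; elim: m => // m IH in A f fF CA fA *; move=> ltAm.
have [sFA | nsFA] := boolP (F \subset A); first by exists A.
have [A' [CA' [f' f'F f'A'] ltA']] := C_cut_extend CA fF fA nsFA.
by apply: (IH A' f') => //; apply: leq_trans ltA' _.
Qed.

End Cover.

Section Saturate.
Variables (G G' : stree n) (pi : 'I_(nv G) -> 'I_(nv G')) (v' : 'I_(nv G')).
Hypothesis cp : contraction G G' pi.
Local Notation F := [set v | pi v == v'].

(* Removing the fibre of a from A separates F from c; the component of F in what is
   left is a smaller edge cut, and its leaves stay in C by downward closure. *)
Lemma C_cut_shrink (A : {set 'I_(nv G)}) a c : C_cut A -> F \subset A ->
  pi a = pi c -> a \in A -> c \notin A ->
  exists K, [/\ C_cut K, F \subset K & #|K| < #|A|].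
Proof.
move=> [[_ _ _ cCA] LA] sFA ac aA cA.
pose X := A :\: [set x | pi x == pi a].
have sXA : X \subset A by apply: subsetDl.
have aX : a \notin X by rewrite !inE eqxx.
have cX : c \notin X by rewrite !inE negb_and cA orbT.
have sFX : F \subset X.
  apply/subsetP => f fF; rewrite !inE (subsetP sFA _ fF) andbT.
  by apply: contraNneq cA => fa; apply: (subsetP sFA); move: fF; rewrite !inE -ac -fa.
have cCX : connected (adj G) (~: X).
  suff to_c u : u \in ~: X -> connect (induced (adj G) (~: X)) u c.
    move=> x y xX yX; apply: connect_trans (to_c x xX) _.
    by rewrite connect_inducedG_sym to_c.
  rewrite !inE negb_and negbK => /orP[ua | uA].
    have cF2 : c \in [set x | pi x == pi a] by rewrite inE ac.
    have uF2 : u \in [set x | pi x == pi a] by rewrite inE.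
    apply: (connect_induced_subset _ (fiber_connected cp uF2 cF2)); rewrite -/X.
    by apply/subsetP => z; rewrite !inE => ->.
  by apply: (connect_induced_subset _ (cCA u c _ _)); rewrite ?in_setC ?setCS.
have F_n0 : F != set0.
  have [onto _ _ _] := cp; have [f ff] := onto v'.
  by apply/set0Pn; exists f; rewrite inE ff.
have cutK := edge_cut_component sFX (fiber_connected cp (u := v')) F_n0 cX cCX.
have sKA := subset_trans (component_subset sFX) sXA.
exists (component X F); split; last first.
- apply: proper_card; apply/properP; split=> //; exists a => //.
  by apply: contra aX; apply: (subsetP (component_subset sFX)).
- exact: subset_component.
split=> //; have [_ closedC _] := indC; apply: closedC LA _ (edge_cut_bounds cutK).1.
exact: leaves_subset.
Qed.

Lemma C_cut_saturate (A : {set 'I_(nv G)}) : C_cut A -> F \subset A ->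
  exists A0, [/\ C_cut A0, F \subset A0
                & forall a b, pi a = pi b -> a \in A0 -> b \in A0].
Proof.
have [m] := ubnP #|A|; elim: m => // m IH in A *; move=> ltAm CA sFA.
pose crossing := [pred ac | (pi ac.1 == pi ac.2) && (ac.1 \in A) && (ac.2 \notin A)].
case: (pickP crossing) => [[a c] /andP[/andP[/eqP ac aA] cA] | sat].
  have [K [CK sFK ltKA]] := C_cut_shrink CA sFA ac aA cA.
  by apply: (IH K) => //; apply: leq_trans ltKA _.
exists A; split=> // a b ab aA; apply/negPn/negP => bA.
by have := sat (a, b); rewrite /= ab eqxx aA bA.
Qed.

End Saturate.

Lemma Z_of_not_full (G : stree n) : exists v : 'I_(nv G), ~ Z_of C v.
Proof.
apply: not_all_ex_not => Z_all.
have cT : connected (adj G) [set: 'I_(nv G)].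
  move=> x y _ _; rewrite (eq_connect (e' := adj G)) ?adj_conn // => a b.
  by rewrite /induced !inE !andbT.
have T_n0 : [set: 'I_(nv G)] != set0 by apply/set0Pn; exists (Ordinal (nv_gt0 G)).
have [A [[_ CA_n0 _ _] _]] := C_cut_cover cT (fun v _ => (Z_ofP v).1 (Z_all v)) T_n0.
by rewrite subTset => /eqP AT; rewrite AT setCT eqxx in CA_n0.
Qed.

Section ZContraction.
Variables (G G' : stree n) (pi : 'I_(nv G) -> 'I_(nv G')).
Hypothesis cp : contraction G G' pi.

Lemma Z_of_preim (v : 'I_(nv G)) : Z_of C (pi v) -> Z_of C v.
Proof.
case/Z_ofP=> A' [[_ CA'_n0 cA' cCA'] LA'] vA'; have [onto lfE _ _] := cp.
apply/Z_ofP; exists [set x | pi x \in A']; last by rewrite inE.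
rewrite /C_cut; have -> : leaves [set x | pi x \in A'] = leaves A'.
  by apply/setP => i; rewrite !inE lfE.
split=> //.
have CpreE : ~: [set x | pi x \in A'] = [set x | pi x \in ~: A'].
  by apply/setP => x; rewrite !inE.
split; rewrite ?CpreE; try exact: connected_preimset.
- by apply/set0Pn; exists v; rewrite inE.
- have /set0Pn[b' b'A'] := CA'_n0; have [b bb'] := onto b'.
  by apply/set0Pn; exists b; rewrite inE bb'.
Qed.

Lemma Z_of_fiber (v' : 'I_(nv G')) : (forall v, pi v = v' -> Z_of C v) -> Z_of C v'.
Proof.
move=> Z_fib; have [onto lfE _ _] := cp; have [v0 v0v'] := onto v'.
have F_n0 : [set v | pi v == v'] != set0 by apply/set0Pn; exists v0; rewrite inE v0v'.
have coverF : {in [set v | pi v == v'], forall v, exists2 A, C_cut A & v \in A}.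
  by move=> v; rewrite inE => /eqP/Z_fib/Z_ofP.
have [A1 CA1 sFA1] := C_cut_cover (fiber_connected cp (u := v')) coverF F_n0.
have [A [[[A_n0 CA_n0 cA cCA] LA] sFA satA]] := C_cut_saturate cp CA1 sFA1.
pose A' := [set y | [exists x in A, pi x == y]].
have memA' x : (pi x \in A') = (x \in A).
  apply/idP/idP => [| xA]; last by rewrite inE; apply/exists_inP; exists x.
  by rewrite inE => /exists_inP[z zA /eqP zx]; apply: satA zA.
have memCA' x : (pi x \in ~: A') = (x \in ~: A) by rewrite !in_setC memA'.
apply/Z_ofP; exists A'; last by rewrite -v0v' memA' (subsetP sFA) // inE v0v'.
rewrite /C_cut; have -> : leaves A' = leaves A.
  by apply/setP => i; rewrite [in LHS]inE lfE memA' inE.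
split=> //; split.
- by have /set0Pn[a aA] := A_n0; apply/set0Pn; exists (pi a); rewrite memA'.
- by have /set0Pn[b bA] := CA_n0; apply/set0Pn; exists (pi b); rewrite memCA'.
- apply: (connected_imset cp _ _ cA) => [x | x']; first by rewrite memA'.
  by rewrite inE => /exists_inP[x xA /eqP <-]; exists x.
- apply: (connected_imset cp _ _ cCA) => [x | x']; first by rewrite memCA'.
  by have [x <-] := onto x'; rewrite memCA' => xA; exists x.
Qed.

End ZContraction.

Lemma Z_of_smooth : smooth (Z_of C).
Proof.
move=> G v [H [pi [H2 cp LC]]]; exists H, pi; split=> //.
by exists H, id; split=> //; apply: contraction_id.
Qed.

End ContractionIndicator.

Theorem proposition7p7 (n : nat) (C : {set {set 'I_n}}) :
  contraction_indicator C -> extremal (Z_of C) /\ smooth (Z_of C).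
Proof.
move=> indC; split; last exact: Z_of_smooth.
split=> [G | G G' pi cp v']; first exact: Z_of_not_full.
split=> [Zv' v piv | Z_fib]; last exact: Z_of_fiber Z_fib.
by apply: Z_of_preim cp _ _; rewrite piv.
Qed.
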